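(* Let $(X,Y)$ be random variables with values in $[0,1]$ and let $0\le a\le b\le 1$. If $P\big((X-a)(Y-b)<0\big)=1$ and $P(Y>b)>0$, then the distribution of $(X,Y)$ is not coherent.
   Context: A distribution of $(X,Y)$ on $[0,1]^2$ is coherent if there exist, on some probability space, random variables with that joint distribution and an event $A$ such that $X=P(A\mid X)$ and $Y=P(A\mid Y)$. *)

From HB Require Import structures.
From mathcomp Require Import all_boot all_order all_algebra.
From mathcomp Require Import all_classical all_reals all_analysis.
Set Implicit Arguments. Unset Strict Implicit. Unset Printing Implicit Defensive.
Import Order.TTheory GRing.Theory Num.Theory.
Local Open Scope classical_set_scope.
Local Open Scope ring_scope.

(* [cond_prob_is P A Z] : Z is a version of P(A | Z), i.e. Z = E[1_A | sigma(Z)] a.s.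
   Since Z is sigma(Z)-measurable, this is the defining property
   P(A ∩ {Z ∈ B}) = E[Z ; Z ∈ B] for all Borel B. *)
Definition cond_prob_is {d : measure_display} {T : measurableType d} {R : realType}
  (P : probability T R) (A : set T) (Z : T -> R) : Prop :=
  forall B : set R, measurable B ->
    P (A `&` Z @^-1` B) = (\int[P]_(w in Z @^-1` B) (Z w)%:E)%E.

Definition same_joint_law {d d' : measure_display} {T : measurableType d}
  {T' : measurableType d'} {R : realType}
  (P : probability T R) (X Y : T -> R) (Q : probability T' R) (X' Y' : T' -> R) : Prop :=
  forall E : set (R * R)%type, measurable E ->
    P ((fun w => (X w, Y w)) @^-1` E) = Q ((fun w => (X' w, Y' w)) @^-1` E).

Definition coherent {d : measure_display} {T : measurableType d} {R : realType}
  (P : probability T R) (X Y : T -> R) : Prop :=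
  exists (d' : measure_display) (T' : measurableType d') (Q : probability T' R)
         (X' Y' : T' -> R) (A : set T'),
    measurable_fun setT X' /\ measurable_fun setT Y' /\ measurable A /\
    same_joint_law P X Y Q X' Y' /\
    cond_prob_is Q A X' /\ cond_prob_is Q A Y'.

(* Let A, X', Y' witness coherence, under a probability Q. As (X', Y') has the
   law of (X, Y), almost surely 0 <= X' and (X' - a)(Y' - b) < 0, so the event
   S = {Y' > b} agrees with {0 <= X' < a} up to a null set, and so does A ∩ S
   with its counterpart. Conditioning on X' then gives Q(A ∩ S) <= a Q(S),
   while conditioning on Y' gives Q(A ∩ S) > b Q(S) as soon as Q(S) > 0; since
   a <= b, S is null, contradicting P(Y > b) > 0. *)
From HB Require Import structures.
From mathcomp Require Import all_boot all_order all_algebra.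
From mathcomp Require Import all_classical all_reals all_analysis.
From mathcomp Require Import measurable_realfun lra.
Import Order.TTheory GRing.Theory Num.Theory.
Local Open Scope classical_set_scope.
Local Open Scope ring_scope.

Lemma mulr_subr_lt0E {R : realDomainType} (a b x y : R) :
  (x - a) * (y - b) < 0 -> (x < a) = (b < y).
Proof. by move=> neg; case: (ltP x a); case: (ltP b y) => //; nra. Qed.

Section ae_measure.
Local Open Scope ereal_scope.
Context {d} {T : measurableType d} {R : realType} (mu : {measure set T -> \bar R}).

Lemma measure_eq_ae (U V : set T) :
  measurable U -> measurable V -> (\forall w \ae mu, U w <-> V w) -> mu U = mu V.
Proof.
move=> mU mV [N [mN N0 UVN]].
have UV w : ~ N w -> U w <-> V w by move=> Nw; apply: contrapT => /UVN.
rewrite -(measureU0 mU mN N0) -(measureU0 mV mN N0); congr (mu _).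
apply/seteqP; split=> w; have [Nw|Nw] := pselect (N w); try by right.
- by case=> // /(UV w Nw); left.
- by case=> // /(UV w Nw); left.
Qed.

Lemma integral_gt0 (D : set T) (f : T -> R) :
  measurable D -> measurable_fun D f -> (forall x, D x -> 0 < f x)%R ->
  0 < mu D -> 0 < \int[mu]_(x in D) (f x)%:E.
Proof.
move=> mD mf f_gt0 muD_gt0.
have f_ge0 x : D x -> 0 <= (f x)%:E by move=> Dx; rewrite lee_fin ltW ?f_gt0.
rewrite lt0e integral_ge0 // andbT; apply/negP => /eqP int0.
have abs0 : \int[mu]_(x in D) `|(f x)%:E| = 0.
  by rewrite -int0; apply: eq_integral => x /[!inE] Dx; rewrite gee0_abs ?f_ge0.
have mEf : measurable_fun D (EFin \o f) by exact/measurable_EFinP.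
have [N [mN muN0 f0N]] := (ae_eq_integral_abs mu mD mEf).1 abs0.
suff : mu D <= mu N by rewrite muN0 leNgt muD_gt0.
apply: le_measure; rewrite ?inE // => x Dx; apply: f0N => /(_ Dx) [] fx0.
by have := f_gt0 x Dx; rewrite fx0 ltxx.
Qed.

End ae_measure.

Section conditional_probability.
Local Open Scope ereal_scope.
Context {d} {T : measurableType d} {R : realType} {P : probability T R}.
Context {A : set T} {Z : T -> R}.
Hypotheses (mZ : measurable_fun setT Z) (cpZ : cond_prob_is P A Z).

Let measurable_preimage {B : set R} : measurable B -> measurable (Z @^-1` B).
Proof. by move=> mB; rewrite -[_ @^-1` _]setTI; exact: mZ. Qed.

Lemma cond_prob_preimage_le (c : R) (B : set R) :
  measurable B -> B `<=` `[0%R, c] ->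
  P (A `&` Z @^-1` B) <= c%:E * P (Z @^-1` B).
Proof.
move=> mB Bc; have mZB := measurable_preimage mB.
rewrite cpZ // -integral_cst //; apply: ge0_le_integral => //.
- by move=> w /Bc /=; rewrite in_itv /= lee_fin => /andP[].
- exact/measurable_EFinP/measurable_funTS.
- by move=> w /Bc /=; rewrite in_itv /= lee_fin => /andP[].
Qed.

Lemma cond_prob_preimage_gt (c : R) (B : set R) :
  measurable B -> (0 <= c)%R -> B `<=` `]c, +oo[ -> 0 < P (Z @^-1` B) ->
  c%:E * P (Z @^-1` B) < P (A `&` Z @^-1` B).
Proof.
move=> mB c0 Bc PZB_gt0; have mZB := measurable_preimage mB.
have Zc w : (Z @^-1` B) w -> (c < Z w)%R by move/Bc; rewrite /= in_itv /= andbT.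
have mZc : measurable_fun (Z @^-1` B) (fun w => Z w - c)%R.
  by apply: measurable_funB => //; exact: measurable_funTS.
rewrite cpZ // (eq_integral (fun w => (Z w - c)%:E + c%:E)); last first.
  by move=> w _; rewrite -EFinD subrK.
rewrite ge0_integralD //; last 2 first.
- by move=> w /Zc; rewrite lee_fin subr_ge0 => /ltW.
- exact/measurable_EFinP.
rewrite integral_cst // -[ltLHS]add0e lteD2rE ?fin_numM ?fin_num_measure //.
by apply: integral_gt0 => // w /Zc; rewrite subr_gt0.
Qed.

End conditional_probability.

Section level_sets.
Local Open Scope ereal_scope.
Context {d} {T : measurableType d} {R : realType} {P : probability T R}.
Context {A : set T} {X Y : T -> R}.
Hypotheses (mA : measurable A).
Hypotheses (mX : measurable_fun setT X) (mY : measurable_fun setT Y).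
Hypotheses (cpX : cond_prob_is P A X) (cpY : cond_prob_is P A Y).

Lemma cond_prob_level_sets_null (a b : R) : (0 <= b)%R -> (a <= b)%R ->
  (\forall w \ae P, (X w \in `[0%R, a[) <-> (Y w \in `]b, +oo[)) ->
  P (Y @^-1` `]b, +oo[) = 0.
Proof.
move=> b0 ab XY_ae; pose SX := X @^-1` `[0%R, a[; pose SY := Y @^-1` `]b, +oo[.
have mSX : measurable SX by rewrite -[SX]setTI; exact: mX.
have mSY : measurable SY by rewrite -[SY]setTI; exact: mY.
have PSX_SY : P SX = P SY by exact: measure_eq_ae.
have PASX_ASY : P (A `&` SX) = P (A `&` SY).
  apply: measure_eq_ae; try exact: measurableI.
  by apply: filterS XY_ae => w XYw; split=> -[Aw /XYw].
apply/eqP; rewrite eq_le measure_ge0 andbT leNgt; apply/negP => PSY_gt0.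
have PASX_le : P (A `&` SX) <= a%:E * P SX.
  by apply: (cond_prob_preimage_le mX cpX) => //; apply: subset_itvl; rewrite bnd_simp.
have PASY_gt : b%:E * P SY < P (A `&` SY).
  exact: (cond_prob_preimage_gt mY cpY) PSY_gt0.
move: PASX_le; rewrite PASX_ASY PSX_SY => /(lt_le_trans PASY_gt).
by rewrite ltNge lee_wpmul2r // lee_fin.
Qed.

End level_sets.

Section joint_law.
Local Open Scope ereal_scope.
Context {d d'} {T : measurableType d} {T' : measurableType d'} {R : realType}.
Context {P : probability T R} {Q : probability T' R} {X Y : T -> R} {X' Y' : T' -> R}.
Hypothesis law : same_joint_law P X Y Q X' Y'.

Lemma same_joint_law_snd (B : set R) :
  measurable B -> P (Y @^-1` B) = Q (Y' @^-1` B).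
Proof.
move=> mB; rewrite (_ : Y @^-1` B = (fun w => (X w, Y w)) @^-1` (setT `*` B)).
  rewrite (_ : Y' @^-1` B = (fun w => (X' w, Y' w)) @^-1` (setT `*` B)).
    by apply: law; exact: measurableX.
  by apply/seteqP; split=> w //= [].
by apply/seteqP; split=> w //= [].
Qed.

Hypotheses (mX : measurable_fun setT X) (mY : measurable_fun setT Y).
Hypotheses (mX' : measurable_fun setT X') (mY' : measurable_fun setT Y').

Lemma same_joint_law_ae (E : set (R * R)) : measurable E ->
  P ((fun w => (X w, Y w)) @^-1` E) = 1 -> \forall w \ae Q, E (X' w, Y' w).
Proof.
move=> mE PE1; exists ((fun w => (X' w, Y' w)) @^-1` ~` E); split => //.
- rewrite -[_ @^-1` _]setTI; apply: (measurable_fun_pair mX' mY') => //.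
  exact: measurableC.
- rewrite -law; last exact: measurableC.
  rewrite preimage_setC probability_setC ?PE1 ?subee //.
  by rewrite -[X in measurable X]setTI; exact: (measurable_fun_pair mX mY).
Qed.

End joint_law.

Lemma measurable_mul_subr_lt0 {R : realType} (a b : R) :
  measurable [set p : R * R | 0 <= p.1 /\ (p.1 - a) * (p.2 - b) < 0].
Proof.
have mf : measurable_fun setT (fun p : R * R => (p.1 - a) * (p.2 - b)).
  by apply: measurable_funM; apply: measurable_funB.
rewrite [X in measurable X](_ : _ =
  (setT `&` fst @^-1` `[0, +oo[) `&`
  (setT `&` (fun p : R * R => (p.1 - a) * (p.2 - b)) @^-1` `]-oo, 0[)).
  by apply: measurableI; [exact: measurable_fst | exact: mf].
apply/seteqP; split=> p /=; rewrite !in_itv /= ?andbT; first by case.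
by case=> -[_ ->] [_ ->].
Qed.

Theorem corollary2p2 (d : measure_display) (T : measurableType d) (R : realType)
  (P : probability T R) (X Y : T -> R) (a b : R) :
  measurable_fun setT X -> measurable_fun setT Y ->
  (forall w, 0 <= X w <= 1) -> (forall w, 0 <= Y w <= 1) ->
  0 <= a -> a <= b -> b <= 1 ->
  P [set w | (X w - a) * (Y w - b) < 0] = 1%E ->
  (0 < P [set w | (b < Y w)%R])%E ->
  ~ coherent P X Y.
Proof.
move=> mX mY X01 _ a0 ab _ Pneg PYb.
move=> [d' [T' [Q [X' [Y' [A [mX' [mY' [mA [law [cpX cpY]]]]]]]]]]].
have neg_ae : \forall w \ae Q, 0 <= X' w /\ (X' w - a) * (Y' w - b) < 0.
  apply: (same_joint_law_ae law mX mY mX' mY' _ (measurable_mul_subr_lt0 a b)).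
  rewrite -Pneg; congr (P _); apply/seteqP; split=> w /=; first by case.
  by split=> //; case/andP: (X01 w).
have levels_ae : \forall w \ae Q, (X' w \in `[0, a[) <-> (Y' w \in `]b, +oo[).
  apply: filterS neg_ae => w [X'0 /mulr_subr_lt0E X'a_Y'b].
  by rewrite !in_itv /= X'0 andbT X'a_Y'b.
have PYb0 : P (Y @^-1` `]b, +oo[) = 0%E.
  rewrite (same_joint_law_snd law) //.
  apply: (cond_prob_level_sets_null mA mX' mY' cpX cpY) levels_ae => //.
  exact: le_trans a0 ab.
move: PYb; rewrite (_ : [set w | _] = Y @^-1` `]b, +oo[) ?PYb0 ?ltxx //.
by apply/seteqP; split=> w; rewrite /= in_itv /= andbT.
Qed.
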